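(* Consider a main effect plan on $n$ runs with factors $F_1,\dots,F_m$ ($m\ge 2$), every level of every factor occurring, which is orthogonal through $F_m$, i.e. $N_{ij}=N_{im}R_m^{-1}N_{mj}$ for all distinct $i,j\in\{1,\dots,m-1\}$. Then: (a) for every $i\in\{1,\dots,m-1\}$, with $\bar i=\{1,\dots,m+1\}\setminus\{i\}$, one has $C_{i;\bar i}=R_i-N_{im}R_m^{-1}N_{im}'$ and $Q_{i;\bar i}=T_i-N_{im}R_m^{-1}T_m$, so the reduced normal equation $C_{i;\bar i}\widehat{\alpha^i}=Q_{i;\bar i}$ for $\alpha^i$ reads $(R_i-N_{im}R_m^{-1}N_{im}')\widehat{\alpha^i}=T_i-N_{im}R_m^{-1}T_m$; (b) the error sum of squares satisfies $$SS_E=SS_{tot}-\sum_{j=1}^{m-1}SS_{j;\{m,m+1\}}-SS_{m;\{m+1\}}.$$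
   Context: Model: $Y=\mathbf 1_n\mu+\sum_{i=1}^m X_i\alpha^i+\epsilon$ with uncorrelated homoscedastic errors, where $X_i$ is the $n\times a_i$ 0-1 design matrix of $F_i$ ($(u,t)$ entry $1$ iff $F_i$ is at level $t$ in run $u$); $X_{m+1}=\mathbf 1_n$. $N_{ij}=X_i'X_j$, $r_i=X_i'\mathbf 1_n$, $R_i=\mathrm{diag}(r_i)$, $T_i=X_i'Y$ (vector of level totals of $F_i$). $P_S$ is the orthogonal projector onto the column space of $[X_j]_{j\in S}$ for $S\subseteq\{1,\dots,m+1\}$. For $i\notin T$: $C_{i;T}=X_i'(I-P_T)X_i$, $Q_{i;T}=X_i'(I-P_T)Y$, $SS_{i;T}=Q_{i;T}'(C_{i;T})^-Q_{i;T}$. $SS_{tot}=\sum_uY_u^2-(\sum_uY_u)^2/n$ and $SS_E=Y'(I-P_{\{1,\dots,m+1\}})Y$. *)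

From HB Require Import structures.
From mathcomp Require Import all_boot all_order all_algebra.
Set Implicit Arguments. Unset Strict Implicit. Unset Printing Implicit Defensive.
Import Order.TTheory GRing.Theory Num.Theory.
Local Open Scope ring_scope.

Section MainEffect.
Variables (R : realFieldType) (n m : nat) (a : 'I_m -> nat)
  (lev : forall i : 'I_m, 'I_n -> 'I_(a i)) (Y : 'cV[R]_n).

Definition desmx (i : 'I_m) : 'M[R]_(n, a i) :=
  \matrix_(u < n, t < a i) ((lev i u == t)%:R : R).

(* index set {1,...,m+1}: Some i is factor F_i, None is X_{m+1} = 1_n *)
Definition colsp (j : option 'I_m) : 'M[R]_n :=
  match j with
  | Some i => <<(desmx i)^T>>%MS
  | None => <<(const_mx 1 : 'M[R]_(1, n))>>%MS
  end.

(* square matrix whose row space = column space of [X_j]_{j in S} (transposed) *)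
Definition spanmx (S : {set option 'I_m}) : 'M[R]_n :=
  (\sum_(j in S) colsp j)%MS.

Definition projS (S : {set option 'I_m}) : 'M[R]_n :=
  let M := (spanmx S)^T in M *m pinvmx (M^T *m M) *m M^T.

Definition Nmx (i j : 'I_m) : 'M[R]_(a i, a j) := (desmx i)^T *m desmx j.
Definition rvec (i : 'I_m) : 'cV[R]_(a i) := (desmx i)^T *m const_mx 1.
Definition Rmx (i : 'I_m) : 'M[R]_(a i) := diag_mx (rvec i)^T.
Definition Tvec (i : 'I_m) : 'cV[R]_(a i) := (desmx i)^T *m Y.

Definition Cmx (i : 'I_m) (T : {set option 'I_m}) : 'M[R]_(a i) :=
  (desmx i)^T *m (1%:M - projS T) *m desmx i.
Definition Qvec (i : 'I_m) (T : {set option 'I_m}) : 'cV[R]_(a i) :=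
  (desmx i)^T *m (1%:M - projS T) *m Y.
(* SS_{i;T} = Q' C^- Q, with the generalized inverse C^- := pinvmx C
   (C *m pinvmx C *m C = C); the value does not depend on the g-inverse. *)
Definition SSi (i : 'I_m) (T : {set option 'I_m}) : R :=
  ((Qvec i T)^T *m pinvmx (Cmx i T) *m Qvec i T) 0 0.

Definition SStot : R :=
  \sum_(u < n) Y u 0 ^+ 2 - (\sum_(u < n) Y u 0) ^+ 2 / n%:R.
Definition SSE : R := (Y^T *m (1%:M - projS setT) *m Y) 0 0.

End MainEffect.

(* Every sum of squares is a quadratic form Y'PY of an orthogonal projector:
   SS_{i;T} = Y' P_B Y, where P_B projects onto the column space of
   B = (I - P_T) X_i.  Since 1_n lies in the column space of X_m, and
   orthogonality through F_m says exactly that the residuals (I - P_m) X_j,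
   j < m, are pairwise orthogonal, the column space of the whole design splits
   orthogonally as
     <1_n> (+) ((I - P_1) X_m) (+) (+)_{j<m} ((I - P_m) X_j),
   so P_{1..m+1} = P_1 + P_{(I-P_1)X_m} + sum_j P_{(I-P_m)X_j}, which is (b).
   For (a), X_i - X_m R_m^-1 N_mi is orthogonal to every X_j with j <> i, so
   the projector onto the other factors maps X_i to X_m R_m^-1 N_mi. *)

From HB Require Import structures.
From mathcomp Require Import all_boot all_order all_algebra.
Set Implicit Arguments. Unset Strict Implicit. Unset Printing Implicit Defensive.
Import Order.TTheory GRing.Theory Num.Theory.
Local Open Scope ring_scope.

Lemma mulmx_tr_eq0 (R : realDomainType) p q (D : 'M[R]_(p, q)) :
  D *m D^T = 0 -> D = 0.
Proof.
move=> DDt0; apply/matrixP => i j; rewrite mxE.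
have sqE : \sum_l D i l ^+ 2 = (D *m D^T) i i.
  by rewrite mxE; apply: eq_bigr => l _; rewrite mxE expr2.
have /psumr_eq0P sq0 : \sum_l D i l ^+ 2 = 0 by rewrite sqE DDt0 mxE.
by apply/eqP; rewrite -sqrf_eq0 sq0 // => l _; rewrite sqr_ge0.
Qed.

Section OrthogonalProjection.
Variables (R : realFieldType) (n : nat).
Implicit Types (p q : nat).

Definition oproj p (W : 'M[R]_(p, n)) : 'M[R]_n :=
  W^T *m pinvmx (W *m W^T) *m W.

Lemma oproj_sub p (W : 'M_(p, n)) : (oproj W <= W)%MS.
Proof. exact: submxMl. Qed.

Lemma mulmx_oproj p (W : 'M_(p, n)) : W *m oproj W = W.
Proof.
set G := pinvmx (W *m W^T).
have WWtG : W *m W^T *m G *m (W *m W^T) = W *m W^T by apply/mulmxKpV.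
set D := W *m W^T *m G *m W - W.
have DWt : D *m W^T = 0 by rewrite mulmxBl -(mulmxA _ W) WWtG subrr.
have DDt : D *m D^T = 0.
  rewrite {2}/D linearB /= !trmx_mul trmxK mulmxBr !mulmxA DWt.
  by rewrite !mul0mx subrr.
have -> : W *m oproj W = W *m W^T *m G *m W by rewrite /oproj !mulmxA.
by apply/eqP; rewrite -subr_eq0 -/D (mulmx_tr_eq0 DDt).
Qed.

Lemma oproj_id p q (W : 'M_(p, n)) (V : 'M_(q, n)) :
  (V <= W)%MS -> V *m oproj W = V.
Proof. by case/submxP=> D ->; rewrite -mulmxA mulmx_oproj. Qed.

Lemma trmx_oproj p (W : 'M_(p, n)) : (oproj W)^T = oproj W.
Proof.
rewrite /oproj; set G := pinvmx _.
have WWtGW : W *m (W^T *m (G *m W)) = W by rewrite !mulmxA -[RHS]mulmx_oproj !mulmxA.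
have WtGtWWt : W^T *m G^T *m W *m W^T = W^T.
  by have := congr1 trmx WWtGW; rewrite !trmx_mul trmxK !mulmxA.
clearbody G; rewrite !trmx_mul trmxK -[in RHS]WtGtWWt -!mulmxA.
by rewrite WWtGW.
Qed.

Lemma mulmx_oproj_orth p q (W : 'M_(p, n)) (V : 'M_(q, n)) :
  V *m W^T = 0 -> V *m oproj W = 0.
Proof. by move=> VWt; rewrite /oproj !mulmxA VWt !mul0mx. Qed.

Lemma oproj_mul_eq0 p q (W : 'M_(p, n)) (Z : 'M_(n, q)) :
  W *m Z = 0 -> oproj W *m Z = 0.
Proof. by move=> WZ; rewrite /oproj -mulmxA WZ mulmx0. Qed.

Lemma oproj_idT p q (W : 'M_(p, n)) (V : 'M_(q, n)) :
  (V <= W)%MS -> oproj W *m V^T = V^T.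
Proof. by move=> sVW; rewrite -trmx_oproj -trmx_mul oproj_id. Qed.

Lemma oproj_unique p (W : 'M_(p, n)) (P : 'M_n) :
  (P <= W)%MS -> W *m P = W -> P^T = P -> oproj W = P.
Proof.
move=> sPW WP tP.
have PQ : P *m oproj W = P by apply: oproj_id.
have QP : oproj W *m P = oproj W.
  rewrite -[oproj W in LHS](mulmxKpV (oproj_sub W)) -(mulmxA _ W P) WP.
  exact/mulmxKpV/oproj_sub.
by rewrite -tP -PQ trmx_mul trmx_oproj tP QP.
Qed.

Lemma eqmx_oproj p q (V : 'M_(p, n)) (W : 'M_(q, n)) :
  (V == W)%MS -> oproj V = oproj W.
Proof.
case/andP=> sVW sWV; apply: oproj_unique.
- exact: submx_trans (oproj_sub W) sWV.
- exact: oproj_id.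
- exact: trmx_oproj.
Qed.

Lemma oproj_addsmx p q (U : 'M_(p, n)) (V : 'M_(q, n)) :
  U *m V^T = 0 -> oproj (U + V)%MS = oproj U + oproj V.
Proof.
move=> UVt; have VUt : V *m U^T = 0 by rewrite -[V]trmxK -trmx_mul UVt trmx0.
apply: oproj_unique.
- by rewrite addmx_sub // (submx_trans (oproj_sub _)) ?addsmxSl ?addsmxSr.
- suff /eigenspaceP : ((U + V)%MS <= eigenspace (oproj U + oproj V) 1)%MS.
    by rewrite scale1r.
  rewrite addsmx_sub; apply/andP; split; apply/eigenspaceP.
    by rewrite scale1r mulmxDr mulmx_oproj mulmx_oproj_orth ?addr0.
  by rewrite scale1r mulmxDr mulmx_oproj mulmx_oproj_orth ?add0r.
- by rewrite linearD /= !trmx_oproj.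
Qed.

Lemma oproj_sumsmx (I : finType) (P : pred I) (q : I -> nat)
    (B : forall i, 'M_(q i, n)) :
    (forall i j, P i -> P j -> i != j -> B i *m (B j)^T = 0) ->
  oproj (\sum_(i | P i) <<B i>>)%MS = \sum_(i | P i) oproj (B i).
Proof.
move=> orthB; apply: oproj_unique.
- apply: summx_sub => i Pi; apply: submx_trans (oproj_sub _) _.
  by apply: (sumsmx_sup i) => //; rewrite genmxE.
- set S := (\sum_(i | P i) <<B i>>)%MS.
  suff /eigenspaceP : (S <= eigenspace (\sum_(i | P i) oproj (B i)) 1)%MS.
    by rewrite scale1r.
  apply/sumsmx_subP => i Pi; rewrite genmxE; apply/eigenspaceP.
  rewrite scale1r mulmx_sumr (bigD1 i) //= mulmx_oproj big1 ?addr0 // => j.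
  by case/andP=> Pj ji; rewrite mulmx_oproj_orth // orthB // eq_sym.
- by rewrite linear_sum; apply: eq_bigr => i _; apply: trmx_oproj.
Qed.

Lemma trmx_oprojC p (W : 'M_(p, n)) : (1%:M - oproj W)^T = 1%:M - oproj W.
Proof. by rewrite linearB /= trmx1 trmx_oproj. Qed.

Lemma oprojC_idem p (W : 'M_(p, n)) :
  (1%:M - oproj W) *m (1%:M - oproj W) = 1%:M - oproj W.
Proof.
by rewrite mulmxBl mul1mx mulmxBr mulmx1 oproj_id ?oproj_sub // subrr subr0.
Qed.

Lemma oproj_split p q (V : 'M_(p, n)) (W : 'M_(q, n)) :
  (V <= W)%MS -> oproj W = oproj V + oproj (W *m (1%:M - oproj V)).
Proof.
move=> sVW; have WPV_V : (W *m oproj V <= V)%MS.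
  exact: submx_trans (submxMl _ _) (oproj_sub V).
rewrite -oproj_addsmx; last first.
  by rewrite trmx_mul trmx_oprojC mulmxA mulmxBr mulmx1 mulmx_oproj subrr mul0mx.
apply: eqmx_oproj; apply/andP; split; rewrite mulmxBr mulmx1.
  rewrite -{1}(subrK (W *m oproj V) W) addrC.
  by apply: addmx_sub; [apply: submx_trans WPV_V _; apply: addsmxSl | apply: addsmxSr].
rewrite addsmx_sub sVW /=; apply: addmx_sub => //.
by rewrite eqmx_opp (submx_trans WPV_V).
Qed.

Lemma pinv_quad_oproj q (X : 'M_(n, q)) (M : 'M_n) (Y : 'cV_n) :
    M^T = M -> M *m M = M ->
  (X^T *m M *m Y)^T *m pinvmx (X^T *m M *m X) *m (X^T *m M *m Y)
    = Y^T *m oproj (X^T *m M) *m Y.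
Proof.
move=> tM MM; have -> : X^T *m M *m X = X^T *m M *m (X^T *m M)^T.
  by rewrite trmx_mul tM trmxK mulmxA -(mulmxA X^T M M) MM.
by rewrite /oproj trmx_mul !mulmxA.
Qed.

Lemma oproj_const1 (J := const_mx 1 : 'M[R]_(1, n)) :
  oproj J = n%:R^-1 *: (J^T *m J).
Proof.
have [n0|n_gt0] := posnP n.
  by apply/matrixP => i; have := ltn_ord i; rewrite [X in (_ < X)%N]n0.
have JJt : J *m J^T = n%:R%:M.
  apply/matrixP => i j; rewrite !ord1 !mxE /= mulr1n.
  by rewrite (eq_bigr (fun=> 1)) ?sumr_const ?card_ord // => u _; rewrite !mxE mulr1.
have nU : (n%:R%:M : 'M[R]_1) \in unitmx.
  by rewrite unitmxE det_scalar1 unitfE pnatr_eq0 -lt0n.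
by rewrite /oproj JJt pinvmxE // invmx_scalar mul_mx_scalar -scalemxAl.
Qed.

End OrthogonalProjection.

Section QuadraticForm.
Variables (R : comRingType) (n : nat) (Y : 'cV[R]_n).

Definition qform (M : 'M[R]_n) : R := (Y^T *m M *m Y) 0 0.

Lemma qformB (M N : 'M_n) : qform (M - N) = qform M - qform N.
Proof. by rewrite /qform mulmxBr mulmxBl !mxE. Qed.

Lemma qformZ c (M : 'M_n) : qform (c *: M) = c * qform M.
Proof. by rewrite /qform -scalemxAr -scalemxAl mxE. Qed.

Lemma qform_sum (I : finType) (P : pred I) (M : I -> 'M_n) :
  qform (\sum_(i | P i) M i) = \sum_(i | P i) qform (M i).
Proof. by rewrite /qform mulmx_sumr mulmx_suml summxE. Qed.

End QuadraticForm.

Section MainEffectPlan.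
Variables (R : realFieldType) (n m : nat) (a : 'I_m -> nat).
Variable lev : forall i : 'I_m, 'I_n -> 'I_(a i).
Local Notation X := (desmx R lev).
Local Notation N := (Nmx R lev).
Local Notation ones := (const_mx 1 : 'M[R]_(1, n)).

Lemma const1_mul_trdesmx i : (const_mx 1 : 'rV_(a i)) *m (X i)^T = ones.
Proof.
apply/matrixP => ? u; rewrite !mxE (bigD1 (lev i u)) //= big1 ?addr0.
  by rewrite !mxE eqxx mul1r.
by move=> t /negPf tu; rewrite !mxE eq_sym tu mulr0.
Qed.

Lemma const1_sub_desmx i : (ones <= (X i)^T)%MS.
Proof. by rewrite -(const1_mul_trdesmx i) submxMl. Qed.

Lemma Nmx_diag i : N i i = Rmx R lev i.
Proof.
apply/matrixP => t t'; rewrite !mxE; under eq_bigr => u _ do rewrite !mxE -natrM mulnb.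
case: (eqVneq t t') => [<-|tt'] /=.
  by rewrite mulr1n; apply: eq_bigr => u _; rewrite !mxE mulr1 andbb.
rewrite mulr0n big1 // => u _.
by case: (eqVneq (lev i u) t) => [->|] //; rewrite (negPf tt').
Qed.

Lemma trNmx i j : (N i j)^T = N j i.
Proof. by rewrite /Nmx trmx_mul trmxK. Qed.

Lemma Rmx_unit i : (forall t, exists u, lev i u = t) -> Rmx R lev i \in unitmx.
Proof.
move=> onto; rewrite unitmxE det_diag unitfE; apply/prodf_neq0 => t _.
have [u0 lev_u0] := onto t; rewrite !mxE (bigD1 u0) //= !mxE lev_u0 eqxx mulr1.
rewrite paddr_eq0 ?oner_eq0 ?ler01 //.
by apply: sumr_ge0 => u _; rewrite !mxE mulr1 ler0n.
Qed.

Lemma trmx_invRmx i : (invmx (Rmx R lev i))^T = invmx (Rmx R lev i).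
Proof. by rewrite trmx_inv /Rmx tr_diag_mx. Qed.

Lemma projSE S : projS R lev S = oproj (spanmx R lev S).
Proof. by rewrite /projS /oproj trmxK. Qed.

Lemma projS_desmx1 k : projS R lev [set Some k; None] = oproj (X k)^T.
Proof.
rewrite projSE; apply: eqmx_oproj; apply/andP; split.
  apply/sumsmx_subP => -[j|] /set2P[] // => [[->]|_] /=; rewrite genmxE //.
  exact: const1_sub_desmx.
apply: (sumsmx_sup (Some k)); first by rewrite !inE eqxx.
by rewrite genmxE.
Qed.

Lemma projS_1 : projS R lev [set None] = oproj ones.
Proof.
rewrite projSE; apply: eqmx_oproj; apply/andP; split.
  by apply/sumsmx_subP => j /set1P ->; rewrite genmxE.
by apply: (sumsmx_sup None); rewrite ?inE //= genmxE.
Qed.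

Lemma SSi_qform Y j T :
  SSi lev Y j T = qform Y (oproj ((X j)^T *m (1%:M - projS R lev T))).
Proof.
by rewrite /SSi /Qvec /Cmx projSE pinv_quad_oproj ?trmx_oprojC ?oprojC_idem.
Qed.

Lemma SSE_qform Y : SSE lev Y = qform Y (1%:M - projS R lev setT).
Proof. by []. Qed.

Lemma SStot_qform Y : SStot Y = qform Y (1%:M - oproj ones).
Proof.
rewrite qformB oproj_const1 qformZ.
have sumY : ones *m Y = (\sum_u Y u 0)%:M.
  apply/matrixP => i j; rewrite !ord1 !mxE /= mulr1n.
  by apply: eq_bigr => u _; rewrite !mxE mul1r.
have -> : qform Y 1%:M = \sum_u Y u 0 ^+ 2.
  by rewrite /qform mulmx1 mxE; apply: eq_bigr => u _; rewrite mxE expr2.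
have -> : qform Y (ones^T *m ones) = (\sum_u Y u 0) ^+ 2.
  rewrite /qform (_ : _ *m Y = (ones *m Y)^T *m (ones *m Y)).
    by rewrite sumY tr_scalar_mx -scalar_mxM mxE /= mulr1n expr2.
  by rewrite trmx_mul !mulmxA.
by rewrite /SStot mulrC.
Qed.

Section OrthogonalThroughFactor.
Variable k : 'I_m.
Hypothesis Rk_unit : Rmx R lev k \in unitmx.
Hypothesis horth : forall i j : 'I_m, i != k -> j != k -> i != j ->
  N i j = N i k *m invmx (Rmx R lev k) *m N k j.
Local Notation Rk' := (invmx (Rmx R lev k)).

Lemma oproj_desmx : oproj (X k)^T = X k *m Rk' *m (X k)^T.
Proof. by rewrite /oproj trmxK -[(X k)^T *m X k]/(N k k) Nmx_diag pinvmxE. Qed.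

Lemma projS_compl_desmx i :
  i != k -> projS R lev [set j | j != Some i] *m X i = X k *m Rk' *m N k i.
Proof.
move=> ik; rewrite projSE; set S := spanmx R lev _.
set Z := X i - X k *m Rk' *m N k i.
have XtZ j : j != i -> (X j)^T *m Z = 0.
  move=> ji; rewrite mulmxBr !mulmxA -[(X j)^T *m X i]/(N j i).
  rewrite -[(X j)^T *m X k]/(N j k).
  have [->|jk] := eqVneq j k; first by rewrite Nmx_diag mulmxV ?mul1mx ?subrr.
  by rewrite (horth jk ik ji) -(mulmxA _ (X k)^T) subrr.
have SZ : S *m Z = 0.
  apply/sub_kermxP/sumsmx_subP => -[j|]; rewrite inE /= genmxE => ji; apply/sub_kermxP.
    by apply: XtZ; apply: contraNneq ji => ->.
  by rewrite -(const1_mul_trdesmx k) -mulmxA XtZ ?mulmx0 // eq_sym.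
have PXk : oproj S *m X k = X k.
  rewrite -[X k]trmxK oproj_idT //.
  apply: (sumsmx_sup (Some k)); last by rewrite genmxE.
  by rewrite inE; apply: contraNneq ik => -[->].
rewrite -(subrK (X k *m Rk' *m N k i) (X i)) -/Z mulmxDr.
by rewrite (oproj_mul_eq0 SZ) add0r !mulmxA PXk.
Qed.

Lemma Cmx_reduced i : i != k ->
  Cmx R lev i [set j | j != Some i] = Rmx R lev i - N i k *m Rk' *m (N i k)^T.
Proof.
move=> ik; rewrite /Cmx mulmxBr mulmx1 mulmxBl -(mulmxA _ _ (X i)).
rewrite projS_compl_desmx // -[(X i)^T *m X i]/(N i i) Nmx_diag !mulmxA trNmx.
by rewrite -(mulmxA _ (X k)^T).
Qed.

Lemma Qvec_reduced Y i : i != k ->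
  Qvec lev Y i [set j | j != Some i] = Tvec lev Y i - N i k *m Rk' *m Tvec lev Y k.
Proof.
move=> ik; rewrite /Qvec mulmxBr mulmx1 mulmxBl.
have XtP : (X i)^T *m projS R lev [set j | j != Some i] = N i k *m Rk' *m (X k)^T.
  rewrite projSE -trmx_oproj -trmx_mul -projSE projS_compl_desmx //.
  by rewrite trmx_mul trNmx trmx_mul trmx_invRmx mulmxA.
by rewrite XtP -(mulmxA _ (X k)^T).
Qed.

Lemma projS_setT_split : projS R lev setT
  = oproj (X k)^T + \sum_(j | j != k) oproj ((X j)^T *m (1%:M - oproj (X k)^T)).
Proof.
set M := 1%:M - oproj (X k)^T.
have XkM : (X k)^T *m M = 0 by rewrite mulmxBr mulmx1 mulmx_oproj subrr.
have onesM : ones *m M = 0.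
  by rewrite mulmxBr mulmx1 oproj_id ?const1_sub_desmx ?subrr.
have XS j : ((X j)^T <= spanmx R lev setT)%MS.
  by apply: (sumsmx_sup (Some j)); rewrite ?inE //= genmxE.
have orthB i j : i != k -> j != k -> i != j -> (X i)^T *m M *m ((X j)^T *m M)^T = 0.
  move=> ik jk ij; rewrite trmx_mul trmxK trmx_oprojC mulmxA -(mulmxA _ M M).
  rewrite oprojC_idem mulmxBr mulmx1 mulmxBl -[(X i)^T *m X j]/(N i j) horth //.
  by rewrite oproj_desmx !mulmxA -(mulmxA _ (X k)^T (X j)) subrr.
rewrite projSE (oproj_split (XS k)) -oproj_sumsmx //; congr (_ + _).
apply: eqmx_oproj; apply/andP; split.
  rewrite /spanmx sumsmxMr_gen; apply/sumsmx_subP => -[j|] _ /=;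
    rewrite genmxE (eqmxMr _ (genmxE _)).
    have [->|jk] := eqVneq j k; first by rewrite XkM sub0mx.
    by apply: (sumsmx_sup j) => //; rewrite genmxE.
  by rewrite onesM sub0mx.
by apply/sumsmx_subP => j _; rewrite genmxE submxMr.
Qed.

End OrthogonalThroughFactor.

End MainEffectPlan.

Theorem theorem4p5 (R : realFieldType) (n m : nat) (a : 'I_m -> nat)
    (lev : forall i : 'I_m, 'I_n -> 'I_(a i)) (Y : 'cV[R]_n)
    (hm : (2 <= m)%N)
    (k : 'I_m) (hk : k = m.-1 :> nat)   (* k is the factor F_m *)
    (hlev : forall (i : 'I_m) (t : 'I_(a i)), exists u : 'I_n, lev i u = t)
    (horth : forall i j : 'I_m, i != k -> j != k -> i != j ->
       Nmx R lev i j = Nmx R lev i k *m invmx (Rmx R lev k) *m Nmx R lev k j) :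
  (forall i : 'I_m, i != k ->
     Cmx R lev i [set j | j != Some i]
       = Rmx R lev i - Nmx R lev i k *m invmx (Rmx R lev k) *m (Nmx R lev i k)^T
     /\ Qvec lev Y i [set j | j != Some i]
       = Tvec lev Y i - Nmx R lev i k *m invmx (Rmx R lev k) *m Tvec lev Y k)
  /\
  SSE lev Y = SStot Y
     - \sum_(j < m | j != k) SSi lev Y j [set Some k; None]
     - SSi lev Y k [set None].
Proof.
(* [hm] and [hk] only say which factor is F_m; the argument works for any k. *)
have Rk_unit := Rmx_unit R (hlev k).
split=> [i ik | ].
  by split; [apply: Cmx_reduced | apply: Qvec_reduced].
under eq_bigr => j _ do rewrite SSi_qform projS_desmx1.
rewrite SSE_qform SStot_qform SSi_qform projS_1 (projS_setT_split Rk_unit horth).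
rewrite (oproj_split (const1_sub_desmx R lev k)) -qform_sum -!qformB.
by rewrite !opprD !addrA addrAC.
Qed.
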